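(* If $p\le 1-1/e^2$, then for every $n$ we have $x_0(n)=0$.
   Context: Let $p\in(0,1)$ be constant, $q=1-p$, $b=1/q$, $\gamma=\gamma(n)=2\log_b n-2\log_b\log_b n-2\log_b 2$, $\Delta=\gamma-\lfloor\gamma\rfloor\in[0,1)$. Define $\varphi(x)=\varphi_n(x)=(1-\Delta+x)\log_b(1-\Delta+x)+(1-\Delta)(\Delta-x)/2$, and let $x_0=x_0(n)$ be the smallest nonnegative $x$ with $\varphi_n(x)\le0$ (well defined since $\varphi_n(\Delta)=0$, and $x_0\in[0,\Delta]$). *)

From Stdlib Require Import Reals Lra.
Open Scope R_scope.

Definition logb (b x : R) : R := ln x / ln b.

Definition base (p : R) : R := / (1 - p).

Definition gam (p : R) (n : nat) : R :=
  let b := base p in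
  2 * logb b (INR n) - 2 * logb b (logb b (INR n)) - 2 * logb b 2.

Definition Delta (p : R) (n : nat) : R :=
  gam p n - IZR (Int_part (gam p n)).

Definition phi (p : R) (n : nat) (x : R) : R :=
  let D := Delta p n in
  (1 - D + x) * logb (base p) (1 - D + x) + (1 - D) * (D - x) / 2.

Definition is_x0 (p : R) (n : nat) (x : R) : Prop :=
  0 <= x /\ phi p n x <= 0 /\
  (forall y, 0 <= y -> phi p n y <= 0 -> x <= y).

From Pilot Require Import Defs.
From Stdlib Require Import Reals Lra Psatz.
Open Scope R_scope.

(* With t = 1 - Delta in (0, 1], phi_n(0) = t (log_b t + (1 - t) / 2).  The
   condition on p says ln b <= 2, and since ln t <= 0 this gives
   log_b t <= ln t / 2 <= (t - 1) / 2, so phi_n(0) <= 0 and x_0 = 0. *)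

Lemma Delta_bounds (p : R) (n : nat) : 0 <= Defs.Delta p n < 1.
Proof. unfold Defs.Delta; destruct (base_Int_part (gam p n)); lra. Qed.

Lemma ln_base (p : R) : p < 1 -> ln (base p) = - ln (1 - p).
Proof. intros hp1; apply ln_Rinv; lra. Qed.

Lemma ln_base_pos (p : R) : 0 < p < 1 -> 0 < ln (base p).
Proof.
  intros [hp0 hp1]; rewrite ln_base by lra.
  assert (ln (1 - p) < ln 1) by (apply ln_increasing; lra).
  rewrite ln_1 in *; lra.
Qed.

Lemma ln_base_le_2 (p : R) : p <= 1 - / exp 2 -> ln (base p) <= 2.
Proof.
  intros hp.
  assert (hq : exp (- (2)) <= 1 - p) by (rewrite exp_Ropp; lra).
  rewrite ln_base by (pose proof (exp_pos (- (2))); lra).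
  enough (ln (exp (- (2))) <= ln (1 - p)) by (rewrite ln_exp in *; lra).
  destruct hq as [hlt | ->]; [left; apply ln_increasing, hlt; apply exp_pos | lra].
Qed.

Lemma ln_le_pred (t : R) : 0 < t -> ln t <= t - 1.
Proof. intros ht; pose proof (exp_ineq1_le (ln t)); rewrite exp_ln in *; lra. Qed.

Lemma logb_le_half_pred (b t : R) :
  0 < ln b <= 2 -> 0 < t <= 1 -> logb b t <= (t - 1) / 2.
Proof.
  intros [hb0 hb2] ht; unfold logb.
  pose proof (ln_le_pred t (proj1 ht)) as hlnt.
  assert (ln t / ln b <= ln t / 2).
  { unfold Rdiv; apply Rmult_le_compat_neg_l; [lra |].
    apply Rinv_le_contravar; [exact hb0 | exact hb2]. }
  lra.
Qed.

Lemma phi_0_nonpos (p : R) (n : nat) :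
  0 < p < 1 -> p <= 1 - / exp 2 -> phi p n 0 <= 0.
Proof.
  intros hp hpe; pose proof (Delta_bounds p n) as hD.
  pose proof (ln_base_pos p hp) as hb0; pose proof (ln_base_le_2 p hpe) as hb2.
  unfold phi; set (t := 1 - Defs.Delta p n + 0).
  replace (1 - Defs.Delta p n) with t by (unfold t; ring).
  replace (Defs.Delta p n - 0) with (1 - t) by (unfold t; ring).
  assert (ht : 0 < t <= 1) by (unfold t; lra).
  pose proof (logb_le_half_pred (base p) t (conj hb0 hb2) ht) as hlog.
  nra.
Qed.

Theorem lemma3 (p : R) (hp0 : 0 < p) (hp1 : p < 1)
  (hp : p <= 1 - / exp 2) :
  forall n : nat, (2 <= n)%nat -> is_x0 p n 0.
Proof.
  intros n _.
  split; [lra | split].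
  - apply phi_0_nonpos; lra.
  - intros y hy _; exact hy.
Qed.
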